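(* For all teams $T,S$ the following are equivalent: (1) $T\equiv_{\mathrm{st}}S$; (2) there are surjective, non-decreasing functions $\mu,\nu:\mathbb N\to\mathbb N$ such that $T^{\mu(n)}\equiv_{\mathrm{st}}S^{\nu(n)}$ for all $n\ge0$.
   Context: A trace is an infinite sequence $t=t(0)t(1)\cdots$ of subsets of a set $\mathrm{AP}$ of propositions; $t^i:=t(i)t(i+1)\cdots$. A team is a set of traces; $T^i:=\{t^i:t\in T\}$. A stuttering function of a trace $t$ is a strictly increasing function $f:\mathbb N\to\mathbb N$ with $f(0)=0$ such that $t(f(k))=t(f(k)+1)=\cdots=t(f(k+1)-1)$ for all $k\ge0$. A stuttering function of a team $T$ is a function that is a stuttering function of every $t\in T$. For $f:\mathbb N\to\mathbb N$, $t[f]:=t(f(0))t(f(1))t(f(2))\cdots$ and $T[f]:=\{t[f]:t\in T\}$. Teams $T,T'$ are stutter-equivalent ($T\equiv_{\mathrm{st}}T'$) if there are a stuttering function $f$ of $T$ and a stuttering function $f'$ of $T'$ with $T[f]=T'[f']$. *)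

From Stdlib Require Import Arith.

Definition trace (AP : Type) := nat -> (AP -> Prop).
Definition team (AP : Type) := trace AP -> Prop.

Definition trace_suffix {AP : Type} (t : trace AP) (i : nat) : trace AP :=
  fun n => t (i + n).
Definition team_suffix {AP : Type} (T : team AP) (i : nat) : team AP :=
  fun u => exists t, T t /\ u = trace_suffix t i.

Definition stuttering_fun {AP : Type} (t : trace AP) (f : nat -> nat) : Prop :=
  f 0 = 0 /\
  (forall m n, m < n -> f m < f n) /\
  (forall k j, f k <= j < f (S k) -> t j = t (f k)).

Definition team_stuttering_fun {AP : Type} (T : team AP) (f : nat -> nat) : Prop :=
  forall t, T t -> stuttering_fun t f.

Definition trace_comp {AP : Type} (t : trace AP) (f : nat -> nat) : trace AP :=
  fun n => t (f n).
Definition team_comp {AP : Type} (T : team AP) (f : nat -> nat) : team AP :=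
  fun u => exists t, T t /\ u = trace_comp t f.

Definition stutter_equiv {AP : Type} (T T' : team AP) : Prop :=
  exists f f', team_stuttering_fun T f /\ team_stuttering_fun T' f' /\
    team_comp T f = team_comp T' f'.

Definition surjective_nat (mu : nat -> nat) : Prop := forall m, exists n, mu n = m.
Definition nondecreasing_nat (mu : nat -> nat) : Prop := forall m n, m <= n -> mu m <= mu n.

(* Backward direction: such mu, nu satisfy mu 0 = nu 0 = 0, so the case n = 0
   is the claim.  Forward direction: let f, f' be stuttering functions of T and
   S with T[f] = S[f'].  Call positions a of T and b of S aligned at block k
   when f k <= a < f (k+1) and f' k <= b < f' (k+1).  First, aligned suffixes
   are stutter-equivalent: the suffix T^a, resumed along the blocks of f by
   m |-> f (k+m) - a, collapses to T[f]^k, and likewise S^b collapses to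
   S[f']^k = T[f]^k.  Second, a walk through the pairs of aligned positions,
   moving one position forward in T, else in S, else entering the next block in
   both, yields the required mu and nu: both move by steps of at most one and
   the block index grows without bound.  Empty teams are handled separately,
   since their stuttering functions carry no information. *)

From Stdlib Require Import Arith Lia FunctionalExtensionality PropExtensionality Classical.

Lemma team_ext {AP : Type} (A B : team AP) : (forall u, A u <-> B u) -> A = B.
Proof.
  intro H. apply functional_extensionality; intro u.
  apply propositional_extensionality, H.
Qed.

Lemma nondecreasing_of_steps (g : nat -> nat) :
  (forall n, g n <= g (S n)) -> nondecreasing_nat g.
Proof. intros Hg m n Hmn. induction Hmn as [|n _ IH]; [lia|]. specialize (Hg n). lia. Qed.

Lemma surjective_of_unit_steps (g : nat -> nat) :
  g 0 = 0 -> (forall n, g (S n) <= S (g n)) -> (forall x, exists n, x <= g n) ->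
  surjective_nat g.
Proof.
  intros H0 Hstep Hunb x. destruct (Hunb x) as [N HN]. revert x HN.
  induction N as [|N IH]; intros x HN; [exists 0; lia|].
  destruct (Nat.eq_dec x (g (S N))) as [->|Hne]; [exists (S N); reflexivity|].
  apply IH. specialize (Hstep N). lia.
Qed.

Lemma unbounded_of_escaping (g : nat -> nat) :
  (forall n, exists m, g n < g m) -> forall x, exists n, x <= g n.
Proof.
  intros Hesc x. induction x as [|x [n Hn]]; [exists 0; lia|].
  destruct (Hesc n) as [m Hm]. exists m. lia.
Qed.

Lemma increasing_ge_id (f : nat -> nat) : (forall m, f m < f (S m)) -> forall k, k <= f k.
Proof. intros Hf k. induction k as [|k IH]; [lia|]. specialize (Hf k). lia. Qed.

Lemma surjective_nondecreasing_at_0 (g : nat -> nat) :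
  surjective_nat g -> nondecreasing_nat g -> g 0 = 0.
Proof. intros Hs Hm. destruct (Hs 0) as [n Hn]. specialize (Hm 0 n). lia. Qed.

Lemma team_suffix_0 {AP : Type} (T : team AP) : team_suffix T 0 = T.
Proof.
  apply team_ext; intro u; split.
  - intros [t [Ht ->]]. exact Ht.
  - intro Hu. exists u. split; [exact Hu | reflexivity].
Qed.

(* Aligned suffixes.  Starting at a position a in block k of f, the function
   [resume f k a] visits a and then the starts of the later blocks of f. *)

Definition resume (f : nat -> nat) (k a : nat) : nat -> nat := fun m => f (k + m) - a.

Lemma trace_resume {AP : Type} (t : trace AP) (f : nat -> nat) (k a : nat) :
  stuttering_fun t f -> f k <= a < f (S k) ->
  stuttering_fun (trace_suffix t a) (resume f k a) /\
  trace_comp (trace_suffix t a) (resume f k a) = trace_suffix (trace_comp t f) k.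
Proof.
  intros [_ [Hinc Hblock]] Ha. unfold resume.
  assert (Hmono : forall m n, m <= n -> f m <= f n).
  { intros m n Hmn. destruct (Nat.eq_dec m n) as [->|]; [lia|].
    apply Nat.lt_le_incl, Hinc. lia. }
  assert (Hlater : forall m, 0 < m -> a < f (k + m)).
  { intros m Hm. pose proof (Hmono (S k) (k + m)). lia. }
  assert (Hin : forall m, f (k + m) <= a + (f (k + m) - a) < f (S (k + m))).
  { intros [|m].
    - rewrite Nat.add_0_r. lia.
    - pose proof (Hlater (S m)). pose proof (Hinc (k + S m) (S (k + S m))). lia. }
  split; [split; [|split]|].
  - rewrite Nat.add_0_r. lia.
  - intros m n Hmn. pose proof (Hinc (k + m) (k + n)). pose proof (Hlater n). lia.
  - intros m j Hj. unfold trace_suffix.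
    pose proof (Hin m). pose proof (Hlater (S m)). rewrite Nat.add_succ_r in *.
    rewrite (Hblock (k + m) (a + j)) by lia.
    rewrite (Hblock (k + m) (a + (f (k + m) - a))) by lia. reflexivity.
  - apply functional_extensionality; intro m. unfold trace_comp, trace_suffix.
    apply Hblock, Hin.
Qed.

Lemma team_resume {AP : Type} (T : team AP) (f : nat -> nat) (k a : nat) :
  team_stuttering_fun T f -> f k <= a < f (S k) ->
  team_stuttering_fun (team_suffix T a) (resume f k a) /\
  team_comp (team_suffix T a) (resume f k a) = team_suffix (team_comp T f) k.
Proof.
  intros HT Ha. split.
  - intros u [t [Ht ->]]. apply (trace_resume t f k a (HT t Ht) Ha).
  - apply team_ext; intro u; split.
    + intros [v [[t [Ht ->]] ->]]. exists (trace_comp t f).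
      split; [exists t; split; [exact Ht | reflexivity]|].
      apply (proj2 (trace_resume t f k a (HT t Ht) Ha)).
    + intros [v [[t [Ht ->]] ->]]. exists (trace_suffix t a).
      split; [exists t; split; [exact Ht | reflexivity]|].
      symmetry. apply (proj2 (trace_resume t f k a (HT t Ht) Ha)).
Qed.

Lemma aligned_suffixes_stutter_equiv {AP : Type} (T T' : team AP) (f f' : nat -> nat)
    (k a b : nat) :
  team_stuttering_fun T f -> team_stuttering_fun T' f' -> team_comp T f = team_comp T' f' ->
  f k <= a < f (S k) -> f' k <= b < f' (S k) ->
  stutter_equiv (team_suffix T a) (team_suffix T' b).
Proof.
  intros HT HT' Heq Ha Hb.
  destruct (team_resume T f k a HT Ha) as [HTa ETa].
  destruct (team_resume T' f' k b HT' Hb) as [HTb ETb].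
  exists (resume f k a), (resume f' k b). split; [exact HTa | split; [exact HTb |]].
  rewrite ETa, ETb, Heq. reflexivity.
Qed.

Record wstate := WState { blk : nat; lpos : nat; rpos : nat }.

Definition walk_step (f f' : nat -> nat) (s : wstate) : wstate :=
  let (k, a, b) := s in
  if S a <? f (S k) then WState k (S a) b
  else if S b <? f' (S k) then WState k a (S b)
  else WState (S k) (S a) (S b).

Definition walk (f f' : nat -> nat) (n : nat) : wstate :=
  Nat.iter n (walk_step f f') (WState 0 0 0).

Section Walk.
Variables f f' : nat -> nat.
Hypothesis f_0 : f 0 = 0.
Hypothesis f'_0 : f' 0 = 0.
Hypothesis f_incr : forall m, f m < f (S m).
Hypothesis f'_incr : forall m, f' m < f' (S m).

Definition aligned (s : wstate) : Prop :=
  f (blk s) <= lpos s < f (S (blk s)) /\ f' (blk s) <= rpos s < f' (S (blk s)).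

Definition slack (s : wstate) : nat :=
  f (S (blk s)) - lpos s + (f' (S (blk s)) - rpos s).

Lemma walk_step_aligned (s : wstate) : aligned s -> aligned (walk_step f f' s).
Proof.
  destruct s as [k a b]. unfold aligned; simpl. intro Hs.
  destruct (Nat.ltb_spec (S a) (f (S k))); simpl; [lia|].
  destruct (Nat.ltb_spec (S b) (f' (S k))); simpl; [lia|].
  pose proof (f_incr (S k)). pose proof (f'_incr (S k)). lia.
Qed.

Lemma walk_aligned (n : nat) : aligned (walk f f' n).
Proof.
  induction n as [|n IH].
  - unfold aligned; simpl. rewrite f_0, f'_0. pose proof (f_incr 0). pose proof (f'_incr 0). lia.
  - apply walk_step_aligned, IH.
Qed.

Lemma walk_step_unit (s : wstate) :
  lpos s <= lpos (walk_step f f' s) <= S (lpos s) /\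
  rpos s <= rpos (walk_step f f' s) <= S (rpos s).
Proof.
  destruct s as [k a b]; simpl.
  destruct (S a <? f (S k)); simpl; [lia|]. destruct (S b <? f' (S k)); simpl; lia.
Qed.

Lemma walk_step_progress (s : wstate) : aligned s ->
  blk s < blk (walk_step f f' s) \/
  (blk (walk_step f f' s) = blk s /\ slack (walk_step f f' s) < slack s).
Proof.
  destruct s as [k a b]. unfold aligned, slack; simpl. intro Hs.
  destruct (Nat.ltb_spec (S a) (f (S k))); simpl; [right; lia|].
  destruct (Nat.ltb_spec (S b) (f' (S k))); simpl; [right; lia | left; lia].
Qed.

Lemma walk_block_escapes (n : nat) : exists m, blk (walk f f' n) < blk (walk f f' m).
Proof.
  enough (Hd : forall d n, slack (walk f f' n) <= d ->
                 exists m, blk (walk f f' n) < blk (walk f f' m)) by exact (Hd _ n (le_n _)).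
  induction d as [|d IH]; intros n' Hd;
    destruct (walk_step_progress _ (walk_aligned n')) as [Hlt | [Heq Hlt]].
  - exists (S n'). exact Hlt.
  - lia.
  - exists (S n'). exact Hlt.
  - destruct (IH (S n')) as [m Hm]; [simpl in Hlt |- *; lia|].
    exists m. simpl in Heq, Hm. rewrite Heq in Hm. exact Hm.
Qed.

(* Positions in a block of index k are at least k, so both positions are unbounded. *)
Lemma walk_positions_unbounded (x : nat) :
  exists n, x <= lpos (walk f f' n) /\ x <= rpos (walk f f' n).
Proof.
  destruct (unbounded_of_escaping _ walk_block_escapes x) as [n Hn]. exists n.
  pose proof (walk_aligned n) as Hal. unfold aligned in Hal.
  pose proof (increasing_ge_id f f_incr (blk (walk f f' n))).
  pose proof (increasing_ge_id f' f'_incr (blk (walk f f' n))). lia.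
Qed.

Lemma synchronized_traversal :
  exists mu nu : nat -> nat,
    surjective_nat mu /\ nondecreasing_nat mu /\
    surjective_nat nu /\ nondecreasing_nat nu /\
    forall n, exists k, f k <= mu n < f (S k) /\ f' k <= nu n < f' (S k).
Proof.
  exists (fun n => lpos (walk f f' n)), (fun n => rpos (walk f f' n)).
  repeat split.
  - apply surjective_of_unit_steps; [reflexivity | intro n; apply walk_step_unit |].
    intro x. destruct (walk_positions_unbounded x) as [n [Hn _]]. exists n. exact Hn.
  - apply nondecreasing_of_steps. intro n. apply walk_step_unit.
  - apply surjective_of_unit_steps; [reflexivity | intro n; apply walk_step_unit |].
    intro x. destruct (walk_positions_unbounded x) as [n [_ Hn]]. exists n. exact Hn.
  - apply nondecreasing_of_steps. intro n. apply walk_step_unit.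
  - intro n. exists (blk (walk f f' n)). apply walk_aligned.
Qed.

End Walk.

(* Stutter-equivalence relates empty teams only to empty teams, and then all
   suffixes are (vacuously) stutter-equivalent. *)
Lemma stutter_equiv_empty_suffixes {AP : Type} (T T' : team AP) :
  stutter_equiv T T' -> ~ (exists t, T t) ->
  forall a b, stutter_equiv (team_suffix T a) (team_suffix T' b).
Proof.
  intros [f [f' [_ [_ Heq]]]] HT a b.
  assert (HT' : forall s, ~ T' s).
  { intros s Hs. assert (Hc : team_comp T' f' (trace_comp s f')) by (exists s; auto).
    rewrite <- Heq in Hc. destruct Hc as [t [Ht _]]. eauto. }
  exists (fun n => n), (fun n => n). split; [|split].
  - intros u [t [Ht _]]. exfalso. eauto.
  - intros u [s [Hs _]]. exfalso. eapply HT'; eauto.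
  - apply team_ext; intro u; split; intros [v [[t [Ht _]] _]]; exfalso; [eauto | eapply HT'; eauto].
Qed.

Theorem mainTheorem8 (AP : Type) (T S : team AP) :
  stutter_equiv T S <->
  exists mu nu : nat -> nat,
    surjective_nat mu /\ nondecreasing_nat mu /\
    surjective_nat nu /\ nondecreasing_nat nu /\
    forall n, stutter_equiv (team_suffix T (mu n)) (team_suffix S (nu n)).
Proof.
  split.
  - intro Hequiv. destruct (classic (exists t, T t)) as [[t Ht] | HT].
    + destruct Hequiv as [f [f' [HTf [HSf' Heq]]]].
      assert (Hc : team_comp S f' (trace_comp t f)) by (rewrite <- Heq; exists t; auto).
      destruct Hc as [s [Hs _]].
      destruct (HTf t Ht) as [Hf0 [Hf _]]. destruct (HSf' s Hs) as [Hf'0 [Hf' _]].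
      destruct (synchronized_traversal f f' Hf0 Hf'0 (fun m => Hf m _ (Nat.lt_succ_diag_r m))
                  (fun m => Hf' m _ (Nat.lt_succ_diag_r m)))
        as [mu [nu [Hmus [Hmum [Hnus [Hnum Hsync]]]]]].
      exists mu, nu. repeat split; try assumption.
      intro n. destruct (Hsync n) as [k [Ha Hb]].
      exact (aligned_suffixes_stutter_equiv T S f f' k _ _ HTf HSf' Heq Ha Hb).
    + exists (fun n => n), (fun n => n).
      repeat split; try (intro m; exists m; reflexivity); try (intros m n Hmn; exact Hmn).
      intro n. apply stutter_equiv_empty_suffixes; assumption.
  - intros [mu [nu [Hmus [Hmum [Hnus [Hnum Hsuff]]]]]].
    specialize (Hsuff 0).
    rewrite (surjective_nondecreasing_at_0 mu Hmus Hmum),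
            (surjective_nondecreasing_at_0 nu Hnus Hnum), !team_suffix_0 in Hsuff.
    exact Hsuff.
Qed.
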